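(* Let $\beta=w\alpha_i\in\Delta_{im}$ with $i\in I^{im}$, $w\in\mathcal W_{re}$, and let $v,v'\in\mathcal W$ with $v'\xrightarrow{\beta}v$, i.e. $v=r_\beta v'$ and $\ell(v)>\ell(v')$. Let $v=r_{i_k}\cdots r_{i_1}$ be an expression of $v$ and $\{x_1<\cdots<x_p\}=\{1\le x\le k:i_x=i\}$. Then $v'=r_{i_k}\cdots\widehat{r_{i_{x_p}}}\cdots r_{i_1}$, i.e. an expression of $v'$ is obtained by omitting the leftmost occurrence of $r_i$.
   Context: $I$ countable, $A=(a_{ij})$ Borcherds–Cartan matrix ($a_{ii}=2$ or $a_{ii}\in\mathbb Z_{\le0}$; $a_{ij}\in\mathbb Z_{\le0}$, $i\ne j$; $a_{ij}=0\iff a_{ji}=0$), $I^{re}=\{a_{ii}=2\}$, $I^{im}=I\setminus I^{re}$; datum $(A,\{\alpha_i\},\{\alpha_i^\vee\},P,P^\vee)$, $\alpha_i^\vee(\alpha_j)=a_{ij}$, linearly independent simple roots/coroots. $r_i(\mu)=\mu-\alpha_i^\vee(\mu)\alpha_i$; $\mathcal W_{re}=\langle r_i:i\in I^{re}\rangle\subset GL(\mathfrak h^* )$; $\Delta_{im}=\mathcal W_{re}\{\alpha_i\}_{i\in I^{im}}$. Monoid $\mathcal W$ generated by $r_i$ ($i\in I$) with relations $r_i^2=1$ ($i$ real), $(r_ir_j)^m=(r_jr_i)^m=1$ for real $i\neq j$ with $r_ir_j$ of order $m\in\{2,3,4,6\}$ in $GL(\mathfrak h^* )$, $r_ir_j=r_jr_i$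 for $i\in I^{im}$, $j\ne i$, $a_{ij}=0$. $\mathcal W_{re}$ is identified with the subgroup of $\mathcal W$ generated by real $r_i$; for $\beta=w\alpha_i$, $r_\beta=wr_iw^{-1}\in\mathcal W$ (well defined). $\ell$ = length function (minimal number of generators). *)

From HB Require Import structures.
From mathcomp Require Import all_boot all_order all_algebra.
From mathcomp Require Import boolp.
Set Implicit Arguments. Unset Strict Implicit. Unset Printing Implicit Defensive.
Import Order.TTheory GRing.Theory Num.Theory.
Local Open Scope ring_scope.

Definition is_real {I : Type} (A : I -> I -> int) (i : I) : bool := A i i == 2%:Z.

Definition BC_matrix {I : eqType} (A : I -> I -> int) : Prop :=
  (forall i, A i i = 2%:Z \/ A i i <= 0) /\
  (forall i j, i != j -> A i j <= 0) /\
  (forall i j, A i j = 0 <-> A j i = 0).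

(* Realization (h^*, {alpha_i}, {alpha_i^vee}): V plays h^*, cor i : V -> F is
   the pairing with the coroot alpha_i^vee. *)
Definition realization {F : fieldType} {V : lmodType F} {I : eqType}
  (A : I -> I -> int) (alpha : I -> V) (cor : I -> V -> F) : Prop :=
  (forall i (a : F) (x y : V), cor i (a *: x + y) = a * cor i x + cor i y) /\
  (forall i j, cor i (alpha j) = (A i j)%:~R) /\
  (forall (s : seq I) (c : I -> F), uniq s ->
     \sum_(j <- s) c j *: alpha j = 0 -> forall j, j \in s -> c j = 0) /\
  (forall (s : seq I) (c : I -> F), uniq s ->
     (forall x : V, \sum_(j <- s) c j * cor j x = 0) ->
     forall j, j \in s -> c j = 0).

Definition sref {F : fieldType} {V : lmodType F} {I : Type}
  (alpha : I -> V) (cor : I -> V -> F) (i : I) (mu : V) : V :=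
  mu - cor i mu *: alpha i.

Definition fun_order {T : Type} (f : T -> T) (m : nat) : Prop :=
  (0 < m)%N /\ (forall x, iter m f x = x) /\
  (forall k, (0 < k < m)%N -> exists x, iter k f x <> x).

(* Words: [:: j1; ...; jn] represents the product r_j1 ... r_jn in the monoid W.
   Defining relations of W. *)
Inductive wrel {F : fieldType} {V : lmodType F} {I : eqType}
  (A : I -> I -> int) (alpha : I -> V) (cor : I -> V -> F) : seq I -> seq I -> Prop :=
| wrel_sq i : is_real A i -> wrel A alpha cor [:: i; i] [::]
| wrel_braid i j m : is_real A i -> is_real A j -> i != j ->
    m \in [:: 2; 3; 4; 6]%N ->
    fun_order (sref alpha cor i \o sref alpha cor j) m ->
    wrel A alpha cor (flatten (nseq m [:: i; j])) [::]
| wrel_braid' i j m : is_real A i -> is_real A j -> i != j ->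
    m \in [:: 2; 3; 4; 6]%N ->
    fun_order (sref alpha cor i \o sref alpha cor j) m ->
    wrel A alpha cor (flatten (nseq m [:: j; i])) [::]
| wrel_comm i j : ~~ is_real A i -> j != i -> A i j = 0 ->
    wrel A alpha cor [:: i; j] [:: j; i].

Inductive weq {F : fieldType} {V : lmodType F} {I : eqType}
  (A : I -> I -> int) (alpha : I -> V) (cor : I -> V -> F) : seq I -> seq I -> Prop :=
| weq_refl u : weq A alpha cor u u
| weq_sym u v : weq A alpha cor u v -> weq A alpha cor v u
| weq_trans u v w : weq A alpha cor u v -> weq A alpha cor v w -> weq A alpha cor u w
| weq_rel p q u u' : wrel A alpha cor u u' ->
    weq A alpha cor (p ++ u ++ q) (p ++ u' ++ q).

Lemma wlen_ex {F : fieldType} {V : lmodType F} {I : eqType}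
  (A : I -> I -> int) (alpha : I -> V) (cor : I -> V -> F) (s : seq I) :
  exists n, `[< exists u, weq A alpha cor u s /\ size u = n >].
Proof. exists (size s); apply/asboolP; exists s; split=> //; exact: weq_refl. Qed.

Definition wlen {F : fieldType} {V : lmodType F} {I : eqType}
  (A : I -> I -> int) (alpha : I -> V) (cor : I -> V -> F) (s : seq I) : nat :=
  ex_minn (wlen_ex A alpha cor s).

Definition omit_leftmost {I : eqType} (i : I) (s : seq I) : seq I :=
  take (index i s) s ++ drop (index i s).+1 s.

From HB Require Import structures.
From mathcomp Require Import all_boot all_order all_algebra.
Import Order.TTheory GRing.Theory Num.Theory.
Local Open Scope ring_scope.

(* The only defining relations of W in which an imaginary generator r_i occurs
   are the commutations r_i r_j = r_j r_i.  Hence occurrence of i in a word and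
   deletion of its leftmost occurrence are both compatible with the relations,
   so deletion is a well-defined map on W.  Applied to the expression
   w r_i w^-1 v' of v = r_beta v' it returns w w^-1 v' = v'. *)

Lemma omit_leftmostE {I : eqType} (i : I) (s : seq I) : omit_leftmost i s = rem i s.
Proof. by rewrite remE. Qed.

Lemma rem_cat_notin {I : eqType} (i : I) {p : seq I} (r : seq I) :
  i \notin p -> rem i (p ++ r) = p ++ rem i r.
Proof.
elim: p => [|a p IHp] //=; rewrite in_cons negb_or => /andP [ia ip].
by rewrite eq_sym (negbTE ia) IHp.
Qed.

Lemma rem_cat_mem {I : eqType} (i : I) {p : seq I} (r : seq I) :
  i \in p -> rem i (p ++ r) = rem i p ++ r.
Proof.
elim: p => [|a p IHp] //=; rewrite in_cons => /orP [/eqP ->|ip]; first by rewrite eqxx.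
by case: eqP => //= _; rewrite IHp.
Qed.

Section WordCongruence.
Context {F : fieldType} {V : lmodType F} {I : eqType}
  {A : I -> I -> int} {alpha : I -> V} {cor : I -> V -> F}.
Local Notation weqW := (weq A alpha cor).

Lemma weq_cat2 (p q : seq I) {u v : seq I} : weqW u v -> weqW (p ++ u ++ q) (p ++ v ++ q).
Proof.
elim=> [x|x y _ Hyx|x y z _ Hxy _ Hyz|p' q' x x' Hx].
- exact: weq_refl.
- exact: weq_sym.
- exact: weq_trans Hxy Hyz.
- have reassoc y : p ++ (p' ++ y ++ q') ++ q = (p ++ p') ++ y ++ (q' ++ q).
    by rewrite !catA.
  by rewrite !reassoc; apply: weq_rel.
Qed.

Lemma all_real_braid (a b : I) (m : nat) : is_real A a -> is_real A b ->
  all (is_real A) (flatten (nseq m [:: a; b])).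
Proof. by move=> ra rb; elim: m => //= m ->; rewrite ra rb. Qed.

Lemma wrel_real_or_swap {u u' : seq I} : wrel A alpha cor u u' ->
  (all (is_real A) u /\ all (is_real A) u') \/
  (exists k j, [/\ u = [:: k; j], u' = [:: j; k] & j != k]).
Proof.
case=> [a ra|a b m ra rb _ _ _|a b m ra rb _ _ _|a b _ ba _].
- by left; rewrite /= ra.
- by left; rewrite all_real_braid.
- by left; rewrite all_real_braid.
- by right; exists a, b.
Qed.

Lemma notin_all_real {i : I} {p : seq I} :
  ~~ is_real A i -> all (is_real A) p -> i \notin p.
Proof. by move=> ri /allP rp; apply/negP => /rp; rewrite (negbTE ri). Qed.

Lemma weq_mem_imaginary {i : I} {x y : seq I} :
  ~~ is_real A i -> weqW x y -> (i \in x) = (i \in y).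
Proof.
move=> ri; elim=> [//|x' y' _ ->//|x' y' z _ -> _ ->//|p q u u' Hu].
rewrite !mem_cat; case: (wrel_real_or_swap Hu) => [[ru ru']|[k [j [-> -> _]]]].
- by rewrite (negbTE (notin_all_real ri ru)) (negbTE (notin_all_real ri ru')).
- by rewrite !in_cons !in_nil !orbF (orbC (i == k)).
Qed.

Lemma weq_rem_imaginary {i : I} {x y : seq I} :
  ~~ is_real A i -> weqW x y -> weqW (rem i x) (rem i y).
Proof.
move=> ri; elim=> [x'|x' y' _ Hyx|x' y' z _ Hxy _ Hyz|p q u u' Hu].
- exact: weq_refl.
- exact: weq_sym.
- exact: weq_trans Hxy Hyz.
have [ip|ip] := boolP (i \in p); first by rewrite !rem_cat_mem //; apply: weq_rel.
rewrite !(rem_cat_notin _ _ ip).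
case: (wrel_real_or_swap Hu) => [[ru ru']|[k [j [Eu Eu' jk]]]].
  rewrite (rem_cat_notin _ _ (notin_all_real ri ru)).
  by rewrite (rem_cat_notin _ _ (notin_all_real ri ru')); apply: weq_rel.
subst u u' => /=.
have [<- | ki] := eqVneq k i; first by rewrite (negbTE jk); exact: weq_refl.
have [_ | ji] := eqVneq j i; first exact: weq_refl.
exact: (weq_rel p (rem i q) Hu).
Qed.

Lemma weq_cat_rev_real {w : seq I} : all (is_real A) w -> weqW (w ++ rev w) [::].
Proof.
elim: w => [_|a w IHw /andP [ra rw]] /=; first exact: weq_refl.
rewrite rev_cons -cats1 catA.
change (weqW ([:: a] ++ (w ++ rev w) ++ [:: a]) [::]).
apply: weq_trans (weq_cat2 [:: a] [:: a] (IHw rw)) _.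
exact: (weq_rel [::] [::] (wrel_sq alpha cor ra)).
Qed.

End WordCongruence.

Theorem corollary2p2p8 (F : numFieldType) (V : lmodType F) (I : countType)
  (A : I -> I -> int) (alpha : I -> V) (cor : I -> V -> F) :
  BC_matrix A -> realization A alpha cor ->
  forall (i : I) (w : seq I) (beta : V),
  ~~ is_real A i -> all (is_real A) w ->
  beta = foldr (sref alpha cor) (alpha i) w ->
  forall (s t : seq I),
  (* v (given by its expression s) = r_beta v', with r_beta = w r_i w^{-1} *)
  weq A alpha cor s (w ++ [:: i] ++ rev w ++ t) ->
  (wlen A alpha cor t < wlen A alpha cor s)%N ->
  i \in s /\ weq A alpha cor t (omit_leftmost i s).
Proof.
move=> _ _ i w beta ri rw _ s t Es _.
have iw := notin_all_real ri rw.
split; first by rewrite (weq_mem_imaginary ri Es) mem_cat (negbTE iw) mem_head.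
rewrite omit_leftmostE; apply: weq_sym; apply: weq_trans (weq_rem_imaginary ri Es) _.
rewrite rem_cat_notin //= eqxx catA -[_ ++ t]/([::] ++ (w ++ rev w) ++ t).
exact: weq_cat2 (weq_cat_rev_real rw).
Qed.
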